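(* Let $\rho_1,\rho_2$ be two-qubit states and let $\rho'=(I_2\otimes\Lambda^{\mathrm{tel}}_{\rho_2})(\rho_1)$ be the end-to-end state of a non-postselected entanglement swap (the second qubit of $\rho_1$ is teleported using $\rho_2$ as resource). Then $\mathcal B(\rho')=\rho'_{\mathcal B}$, where $\rho'_{\mathcal B}=\sum_k\lambda'_k|\Psi_{(k)}\rangle\langle\Psi_{(k)}|$ is the Bell-diagonal state with $\lambda_0'=\lambda_0\mu_0+\lambda_1\mu_1+\lambda_2\mu_2+\lambda_3\mu_3$, $\lambda_1'=\lambda_0\mu_1+\lambda_1\mu_0+\lambda_2\mu_3+\lambda_3\mu_2$, $\lambda_2'=\lambda_0\mu_2+\lambda_2\mu_0+\lambda_3\mu_1+\lambda_1\mu_3$, $\lambda_3'=\lambda_0\mu_3+\lambda_3\mu_0+\lambda_1\mu_2+\lambda_2\mu_1$, with $(\lambda_0,\dots,\lambda_3)$ and $(\mu_0,\dots,\mu_3)$ the Bell-diagonal elements $\langle\Psi_{(k)}|\rho_1|\Psi_{(k)}\rangle$ and $\langle\Psi_{(k)}|\rho_2|\Psi_{(k)}\rangle$.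
   Context: Bell states: for qubit registers $(R,T)$, $|\Psi_{mn}\rangle_{RT}=(I_R\otimes(X^mZ^n)_T)\tfrac1{\sqrt2}(|00\rangle+|11\rangle)$; $(|\Psi_{(0)}\rangle,\dots,|\Psi_{(3)}\rangle)=(|\Psi_{00}\rangle,|\Psi_{01}\rangle,|\Psi_{10}\rangle,|\Psi_{11}\rangle)$. Bell-diagonal twirl $\mathcal B(\rho)=\tfrac14\sum_{P\in\{I,X,Y,Z\}}(P\otimes P)\rho(P\otimes P)^\dagger=\sum_k\langle\Psi_{(k)}|\rho|\Psi_{(k)}\rangle|\Psi_{(k)}\rangle\langle\Psi_{(k)}|$. Teleportation channel with resource $\rho$ on $AB$, input on $C$: $\Lambda^{\mathrm{tel}}_\rho(\sigma)=\sum_{i,j}(Z^jX^i)_B\langle\Psi_{ij}|_{CA}(\sigma_C\otimes\rho_{AB})|\Psi_{ij}\rangle_{CA}(Z^jX^i)_B^\dagger$; in $(I_2\otimes\Lambda^{\mathrm{tel}}_{\rho_2})(\rho_1)$ it acts (linearly) on the second qubit of $\rho_1$. *)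

From HB Require Import structures.
From mathcomp Require Import all_boot all_order all_algebra.
From mathcomp Require Import algC.
From mathcomp Require Import mxtens.
Set Implicit Arguments. Unset Strict Implicit. Unset Printing Implicit Defensive.
Import Order.TTheory GRing.Theory Num.Theory.
Local Open Scope ring_scope.

(* Two-qubit index: 'I_4 with (a,b) |-> 2a+b (first qubit is the most significant). *)
Definition qix (a b : 'I_2) : 'I_4 := @mxtens_index 2 2 (a, b).
Definition qfst (k : 'I_4) : 'I_2 := (@mxtens_unindex 2 2 k).1.
Definition qsnd (k : 'I_4) : 'I_2 := (@mxtens_unindex 2 2 k).2.

Definition k0 : 'I_4 := @Ordinal 4 0 isT.
Definition k1 : 'I_4 := @Ordinal 4 1 isT.
Definition k2 : 'I_4 := @Ordinal 4 2 isT.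
Definition k3 : 'I_4 := @Ordinal 4 3 isT.

Definition adj {m n : nat} (A : 'M[algC]_(m, n)) : 'M[algC]_(n, m) :=
  (map_mx Num.conj A)^T.

Definition PX : 'M[algC]_2 := \matrix_(i, j) (i != j)%:R.
Definition PZ : 'M[algC]_2 :=
  \matrix_(i, j) (if i == j then (-1) ^+ (val i) else 0).
Definition PY : 'M[algC]_2 :=
  \matrix_(i, j) (if i == j then 0 else if val i == 0%N then - 'i else 'i).

Definition phiplus : 'cV[algC]_4 :=
  (sqrtC 2)^-1 *: \col_(k < 4) (if (val k == 0%N) || (val k == 3%N) then 1 else 0).

Definition PsiMN (m n : 'I_2) : 'cV[algC]_4 :=
  ((1%:M : 'M[algC]_2) *t (PX ^+ m *m PZ ^+ n)) *m phiplus.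

Definition Psi (k : 'I_4) : 'cV[algC]_4 := PsiMN (qfst k) (qsnd k).

Definition bell_elem (rho : 'M[algC]_4) (k : 'I_4) : algC :=
  (adj (Psi k) *m rho *m Psi k) 0 0.

Definition bell_proj (k : 'I_4) : 'M[algC]_4 := Psi k *m adj (Psi k).

Definition twirl (rho : 'M[algC]_4) : 'M[algC]_4 :=
  (4%:R)^-1 *: \sum_(P <- [:: 1%:M; PX; PY; PZ])
     ((P *t P) *m rho *m adj (P *t P) : 'M[algC]_4).

(* Teleportation channel with resource rho on AB, input sigma on C
   (qubit order C, A, B):
   sum_{i,j} (Z^j X^i)_B <Psi_ij|_{CA} (sigma_C (x) rho_AB) |Psi_ij>_{CA} (Z^j X^i)_B^dagger *)
Definition tel (rho : 'M[algC]_4) (sigma : 'M[algC]_2) : 'M[algC]_2 :=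
  \sum_(i < 2) \sum_(j < 2)
    let U := PZ ^+ j *m PX ^+ i in
    let bra : 'M[algC]_(1 * 2, 4 * 2) := adj (PsiMN i j) *t (1%:M : 'M[algC]_2) in
    let ket : 'M[algC]_(4 * 2, 1 * 2) := PsiMN i j *t (1%:M : 'M[algC]_2) in
    U *m ((bra *m (sigma *t rho : 'M[algC]_(4 * 2)) *m ket) : 'M[algC]_2) *m adj U.

(* (I_2 (x) L) applied (linearly) to the second qubit of a two-qubit operator:
   writing rho = sum_{r,r'} |r><r'| (x) sigma^{r r'},
   (I (x) L)(rho) = sum_{r,r'} |r><r'| (x) L(sigma^{r r'}). *)
Definition id_tensor (L : 'M[algC]_2 -> 'M[algC]_2) (rho : 'M[algC]_4) : 'M[algC]_4 :=
  \matrix_(k, l)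
    (L (\matrix_(c, c') rho (qix (qfst k) c) (qix (qfst l) c'))) (qsnd k) (qsnd l).

Definition is_state (rho : 'M[algC]_4) : Prop :=
  [/\ adj rho = rho,
      (forall v : 'cV[algC]_4, 0 <= (adj v *m rho *m v) 0 0)
    & \tr rho = 1].

From HB Require Import structures.
From Stdlib Require Import PeanoNat.
From mathcomp Require Import all_boot all_order all_algebra.
From mathcomp Require Import algC.
From mathcomp Require Import mxtens.
From mathcomp Require Import ring.
Import Order.TTheory GRing.Theory Num.Theory.
Local Open Scope ring_scope.

(* Teleporting through a resource rho2 is the Pauli channel
   s |-> sum_k mu_k P_k s P_k^dagger whose weights are the Bell-diagonal
   elements mu_k of rho2, so the swapped state is
   sum_k mu_k (1 (x) P_k) rho1 (1 (x) P_k)^dagger.  Since P_k^dagger P_j is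
   +-P_(j+k), with + the addition of (Z/2)^2, conjugation by 1 (x) P_k maps
   every Bell state to +- the Bell state shifted by k; hence the Bell-diagonal
   elements of the swapped state are the convolution
   lambda'_j = sum_k mu_k lambda_(j+k), and the twirl keeps exactly them. *)

Lemma adj_mul m n p (A : 'M[algC]_(m, n)) (B : 'M_(n, p)) :
  adj (A *m B) = adj B *m adj A.
Proof. by rewrite /adj map_mxM trmx_mul. Qed.

Lemma adj_tens m n p q (A : 'M[algC]_(m, n)) (B : 'M_(p, q)) :
  adj (A *t B) = adj A *t adj B.
Proof. by rewrite /adj map_mxT trmx_tens. Qed.

Lemma adj_scale m n a (A : 'M[algC]_(m, n)) : adj (a *: A) = a^* *: adj A.
Proof. by apply/matrixP=> i j; rewrite !mxE rmorphM. Qed.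

Lemma adj_opp m n (A : 'M[algC]_(m, n)) : adj (- A) = - adj A.
Proof. by apply/matrixP=> i j; rewrite !mxE rmorphN. Qed.

Lemma adjK m n : cancel (@adj m n) (@adj n m).
Proof. by move=> A; apply/matrixP=> i j; rewrite !mxE conjCK. Qed.

Lemma adj_scalar1 n : adj (1%:M : 'M[algC]_n) = 1%:M.
Proof. by apply/matrixP=> i j; rewrite !mxE eq_sym rmorph_nat. Qed.

Lemma adj_exp n (A : 'M[algC]_n.+1) k : adj (A ^+ k) = adj A ^+ k.
Proof.
elim: k => [|k IHk]; first by rewrite !expr0 adj_scalar1.
by rewrite exprS exprSr -!mulmxE adj_mul IHk.
Qed.

Lemma tensmxZl m n p q a (A : 'M[algC]_(m, n)) (B : 'M_(p, q)) :
  (a *: A) *t B = a *: (A *t B).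
Proof. by apply/matrixP=> i j; rewrite !mxE mulrA. Qed.

Lemma tensmxZr m n p q a (A : 'M[algC]_(m, n)) (B : 'M_(p, q)) :
  A *t (a *: B) = a *: (A *t B).
Proof. by apply/matrixP=> i j; rewrite !mxE mulrCA. Qed.

Ltac mx2_entrywise :=
  let i := fresh "i" in let j := fresh "j" in
  apply/matrixP=> i j; rewrite !mxE ?big_ord_recl ?big_ord0 ?mxE;
  case: i => [[|[|//]] ?]; case: j => [[|[|//]] ?]; rewrite /=.

Lemma PX_sqr : PX *m PX = 1%:M.
Proof. by mx2_entrywise; ring. Qed.

Lemma PZ_sqr : PZ *m PZ = 1%:M.
Proof. by mx2_entrywise; ring. Qed.

Lemma PZ_PX_anticomm : PZ *m PX = - (PX *m PZ).
Proof. by mx2_entrywise; ring. Qed.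

Lemma PY_PXPZ : PY = 'i *: (PX *m PZ).
Proof. by mx2_entrywise; ring. Qed.

Lemma adj_PX : adj PX = PX.
Proof. by mx2_entrywise; rewrite ?conjC0 ?conjC1. Qed.

Lemma adj_PZ : adj PZ = PZ.
Proof. by mx2_entrywise; rewrite ?expr0 ?expr1 ?rmorph0 ?rmorph1 ?rmorphN ?rmorph1; ring. Qed.

Lemma anticomm_expr (R : pzRingType) (x y : R) m n :
  y * x = - (x * y) -> y ^+ m * x ^+ n = (-1) ^+ (m * n) * (x ^+ n * y ^+ m).
Proof.
move=> yx; have yxn k : y * x ^+ k = (-1) ^+ k * (x ^+ k * y).
  elim: k => [|k IHk]; first by rewrite !expr0 mulr1 !mul1r.
  by rewrite [x ^+ _.+1]exprSr mulrA IHk -!mulrA yx !mulrN exprS mulN1r mulNr.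
elim: m => [|m IHm]; first by rewrite !expr0 mulr1 !mul1r.
rewrite exprS -mulrA IHm [y * _]mulrA (commr_sign y) -mulrA [y * _]mulrA yxn.
by rewrite mulSn exprD !mulrA (commr_sign ((-1) ^+ (m * n)) n).
Qed.

Lemma qfst_qix a b : qfst (qix a b) = a.
Proof. by rewrite /qfst /qix mxtens_indexK. Qed.

Lemma qsnd_qix a b : qsnd (qix a b) = b.
Proof. by rewrite /qsnd /qix mxtens_indexK. Qed.

Lemma sum_qix (V : nmodType) (F : 'I_4 -> V) :
  \sum_k F k = \sum_a \sum_c F (qix a c).
Proof.
rewrite pair_big (reindex (@mxtens_index 2 2)); first by apply: eq_big => // -[].
by exists (@mxtens_unindex 2 2) => k _; rewrite (mxtens_indexK, mxtens_unindexK).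
Qed.

Lemma sum_I2 (V : nmodType) (F : 'I_2 -> V) : \sum_a F a = F 0 + F 1.
Proof. by rewrite !big_ord_recl big_ord0 addr0; congr (F _ + F _); apply: val_inj. Qed.

Lemma expr_Zp2_0 (R : pzSemiRingType) (x : R) : x ^+ (0%R : 'I_2) = 1.
Proof. exact: expr0. Qed.

Lemma expr_Zp2_1 (R : pzSemiRingType) (x : R) : x ^+ (1%R : 'I_2) = x.
Proof. exact: expr1. Qed.

Lemma expr_Zp2_add (A : 'M[algC]_2) (a b : 'I_2) :
  A *m A = 1%:M -> A ^+ (a + b)%R = A ^+ (a + b)%N.
Proof. by move=> AA; apply: expr_mod; rewrite expr2 -mulmxE. Qed.

Lemma mulr_sign_mx m n (A : 'M[algC]_m.+1) : (-1) ^+ n * A = (-1) ^+ n *: A.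
Proof. by rewrite -signr_odd mulr_sign -signr_odd scaler_sign. Qed.

Definition pauli (k : 'I_4) : 'M[algC]_2 := PX ^+ qfst k *m PZ ^+ qsnd k.

Definition bell_add (j k : 'I_4) : 'I_4 := qix (qfst j + qfst k) (qsnd j + qsnd k).

Definition id_pauli (k : 'I_4) : 'M[algC]_4 := (1%:M : 'M_2) *t pauli k.

Lemma adj_pauli_mul j k :
  adj (pauli k) *m pauli j =
    (-1) ^+ (qsnd k * (qfst k + qfst j)) *: pauli (bell_add j k).
Proof.
rewrite /pauli /bell_add qfst_qix qsnd_qix adj_mul !adj_exp adj_PX adj_PZ.
rewrite !expr_Zp2_add ?PX_sqr ?PZ_sqr // !mulmxE.
rewrite -mulrA [PX ^+ _ * _]mulrA -exprD mulrA anticomm_expr; last first.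
  by rewrite -!mulmxE PZ_PX_anticomm.
by rewrite -!mulrA -exprD mulr_sign_mx (addnC (qfst j)) (addnC (qsnd j)).
Qed.

Lemma adj_id_pauli k : adj (id_pauli k) = (1%:M : 'M_2) *t adj (pauli k).
Proof. by rewrite /id_pauli (@adj_tens 2 2 2 2) adj_scalar1. Qed.

Lemma adj_id_pauli_Psi j k :
  adj (id_pauli k) *m Psi j =
    (-1) ^+ (qsnd k * (qfst k + qfst j)) *: Psi (bell_add j k).
Proof.
rewrite adj_id_pauli [Psi j]/Psi /PsiMN mulmxA (@tensmx_mul _ 2 2 2 2 2 2) mul1mx.
by rewrite adj_pauli_mul tensmxZr -scalemxAl.
Qed.

Lemma conj_form_sign (rho : 'M[algC]_4) {U : 'M_4} {v w : 'cV_4} {e : nat} :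
  adj U *m v = (-1) ^+ e *: w ->
  adj v *m (U *m rho *m adj U) *m v = adj w *m rho *m w.
Proof.
move=> Uv; rewrite !mulmxA -{1}[U]adjK -adj_mul -[_ *m rho *m _ *m _]mulmxA Uv.
by rewrite adj_scale rmorph_sign -!scalemxAl -scalemxAr scalerA -expr2 sqrr_sign scale1r.
Qed.

Lemma bell_elem_id_pauli_conj rho j k :
  bell_elem (id_pauli k *m rho *m adj (id_pauli k)) j = bell_elem rho (bell_add j k).
Proof. by rewrite /bell_elem (conj_form_sign rho (adj_id_pauli_Psi j k)). Qed.

Lemma bell_elem_lincomb (c : 'I_4 -> algC) (X : 'I_4 -> 'M_4) j :
  bell_elem (\sum_k c k *: X k) j = \sum_k c k * bell_elem (X k) j.
Proof.
rewrite /bell_elem mulmx_sumr mulmx_suml summxE; apply: eq_bigr => k _.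
by rewrite -scalemxAr -scalemxAl mxE.
Qed.

Definition qblock (X : 'M[algC]_4) (a b : 'I_2) : 'M_2 :=
  \matrix_(c, d) X (qix a c) (qix b d).

Lemma qblockE (X : 'M[algC]_4) k l :
  X k l = qblock X (qfst k) (qfst l) (qsnd k) (qsnd l).
Proof. by rewrite mxE /qix -!surjective_pairing !mxtens_unindexK. Qed.

Lemma qblock_mull (A : 'M_2) (X : 'M[algC]_4) a b :
  qblock (((1%:M : 'M_2) *t A : 'M_4) *m X) a b = A *m qblock X a b.
Proof.
apply/matrixP=> c d.
rewrite !mxE sum_qix (bigD1 a) //= [X in _ + X]big1 ?addr0 => [|a' a'a].
  by apply: eq_bigr => c' _; rewrite (@tensmxE _ 2 2 2 2) !mxE eqxx mul1r.
by apply: big1 => c' _; rewrite (@tensmxE _ 2 2 2 2) !mxE eq_sym (negbTE a'a) !mul0r.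
Qed.

Lemma qblock_mulr (X : 'M[algC]_4) (B : 'M_2) a b :
  qblock (X *m ((1%:M : 'M_2) *t B : 'M_4)) a b = qblock X a b *m B.
Proof.
apply/matrixP=> c d.
rewrite !mxE sum_qix (bigD1 b) //= [X in _ + X]big1 ?addr0 => [|b' b'b].
  by apply: eq_bigr => d' _; rewrite (@tensmxE _ 2 2 2 2) !mxE eqxx mul1r.
by apply: big1 => d' _; rewrite (@tensmxE _ 2 2 2 2) !mxE (negbTE b'b) mul0r mulr0.
Qed.

Lemma id_tensor_conj (A B : 'M_2) rho :
  id_tensor (fun s => A *m s *m B) rho =
    ((1%:M : 'M_2) *t A : 'M_4) *m rho *m ((1%:M : 'M_2) *t B : 'M_4).
Proof. by apply/matrixP=> k l; rewrite [RHS]qblockE qblock_mulr qblock_mull mxE. Qed.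

Lemma id_tensor_lincomb (c : 'I_4 -> algC) (L : 'I_4 -> 'M_2 -> 'M_2) rho :
  id_tensor (fun s => \sum_k c k *: L k s) rho = \sum_k c k *: id_tensor (L k) rho.
Proof. by apply/matrixP=> i j; rewrite mxE !summxE; apply: eq_bigr => k _; rewrite !mxE. Qed.

Lemma eq_id_tensor {L L' : 'M[algC]_2 -> 'M_2} rho :
  L =1 L' -> id_tensor L rho = id_tensor L' rho.
Proof. by move=> eqL; apply/matrixP=> i j; rewrite !mxE eqL. Qed.

Definition pauli_channel (p : 'I_4 -> algC) (s : 'M[algC]_2) : 'M_2 :=
  \sum_k p k *: (pauli k *m s *m adj (pauli k)).

Lemma id_tensor_pauli_channel p rho :
  id_tensor (pauli_channel p) rho =
    \sum_k p k *: (id_pauli k *m rho *m adj (id_pauli k)).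
Proof.
rewrite (id_tensor_lincomb p (fun k s => pauli k *m s *m adj (pauli k))).
by apply: eq_bigr => k _; rewrite id_tensor_conj adj_id_pauli.
Qed.

(* Entrywise evaluation of concrete matrix expressions: [mx_entries A f] says
   that the entries of [A] are given by [f], a function on nat indices built
   compositionally from the shape of [A].  Once the indices are numerals,
   [cbv] evaluates [f] to a polynomial in the entries of the variable matrices
   ([entry], which is 0 out of range), and [ring] closes the identity. *)

Definition entry {m n} (A : 'M[algC]_(m, n)) (i j : nat) : algC :=
  match @insub _ (fun k => (k < m)%N) 'I_m i, @insub _ (fun k => (k < n)%N) 'I_n j with
  | Some i', Some j' => A i' j'
  | _, _ => 0
  end.

Definition mx_entries {m n} (A : 'M[algC]_(m, n)) (f : nat -> nat -> algC) :=
  forall (i : 'I_m) (j : 'I_n), A i j = f i j.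

Definition fsum n (h : nat -> algC) : algC := foldr (fun k s => h k + s) 0 (iota 0 n).

Lemma fsumE n h : fsum n h = \sum_(k < n) h k.
Proof.
rewrite /fsum -(big_mkord xpredT) /index_iota subn0.
by elim: (iota 0 n) => [|k r /= ->]; rewrite ?big_nil ?big_cons.
Qed.

(* Stdlib's division, unlike [divn], reduces under [cbv] without unfolding the
   eqType structure of [nat]; [ftens] below relies on it. *)
Lemma divn_Nat i p : (i %/ p)%N = Nat.div i p.
Proof.
case: p => [|p]; first by rewrite divn0.
apply: (Nat.div_unique i p.+1 _ (i %% p.+1)%N); first by apply/ssrnat.ltP; rewrite ltn_mod.
by rewrite [LHS](divn_eq i p.+1) mulnC.
Qed.

Lemma modn_Nat i p : (i %% p)%N = Nat.modulo i p.
Proof.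
case: p => [|p]; first by rewrite modn0.
apply: (Nat.mod_unique i p.+1 (i %/ p.+1)%N); first by apply/ssrnat.ltP; rewrite ltn_mod.
by rewrite [LHS](divn_eq i p.+1) mulnC.
Qed.

Definition fmul n (f g : nat -> nat -> algC) i j := fsum n (fun k => f i k * g k j).
Definition fadd (f g : nat -> nat -> algC) i j := f i j + g i j.
Definition fscale a (f : nat -> nat -> algC) i j := a * f i j.
Definition ftens p q (f g : nat -> nat -> algC) i j :=
  f (Nat.div i p) (Nat.div j q) * g (Nat.modulo i p) (Nat.modulo j q).
Definition ftr (f : nat -> nat -> algC) i j := f j i.
Definition fid (i j : nat) : algC := if eqn i j then 1 else 0.
Definition fPX (i j : nat) : algC := if eqn i j then 0 else 1.
Definition fPZ (i j : nat) : algC := if eqn i j then (-1) ^+ i else 0.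
Definition fphi (i j : nat) : algC :=
  (sqrtC 2)^-1 * (if eqn i 0 || eqn i 3 then 1 else 0).

(* Psi_(a,b) = (|0 a> + (-1)^b |1 (1-a)>) / sqrt 2. *)
Definition fbell (a b i j : nat) : algC :=
  (sqrtC 2)^-1 * ((if eqn i a then 1 else 0) + (if eqn i (3 - a) then (-1) ^+ b else 0)).

Lemma mx_entries_var m n (A : 'M_(m, n)) : mx_entries A (entry A).
Proof. by move=> i j; rewrite /entry !valK. Qed.

Lemma mx_entries_mul m n p (A : 'M_(m, n)) (B : 'M_(n, p)) f g :
  mx_entries A f -> mx_entries B g -> mx_entries (A *m B) (fmul n f g).
Proof. by move=> Af Bg i j; rewrite mxE /fmul fsumE; apply: eq_bigr => k _; rewrite Af Bg. Qed.

Lemma mx_entries_add m n (A B : 'M_(m, n)) f g :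
  mx_entries A f -> mx_entries B g -> mx_entries (A + B) (fadd f g).
Proof. by move=> Af Bg i j; rewrite mxE Af Bg. Qed.

Lemma mx_entries_scale m n a (A : 'M_(m, n)) f :
  mx_entries A f -> mx_entries (a *: A) (fscale a f).
Proof. by move=> Af i j; rewrite mxE Af. Qed.

Lemma mx_entries_scale_entry m n (M : 'M_1) (A : 'M_(m, n)) g f :
  mx_entries M g -> mx_entries A f -> mx_entries (M 0 0 *: A) (fscale (g 0 0)%N f).
Proof. by move=> Mg Af i j; rewrite mxE Af Mg. Qed.

Lemma mx_entries_tens m n p q (A : 'M_(m, n)) (B : 'M_(p, q)) f g :
  mx_entries A f -> mx_entries B g -> mx_entries (A *t B) (ftens p q f g).
Proof. by move=> Af Bg i j; rewrite mxE Af Bg /ftens /= !divn_Nat !modn_Nat. Qed.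

Lemma mx_entries_tr m n (A : 'M_(m, n)) f : mx_entries A f -> mx_entries A^T (ftr f).
Proof. by move=> Af i j; rewrite mxE Af. Qed.

Lemma mx_entries_scalar1 n : mx_entries (1%:M : 'M_n) fid.
Proof. by move=> i j; rewrite mxE /fid [eqn _ _]val_eqE; case: (i == j). Qed.

Lemma mx_entries_PX : mx_entries PX fPX.
Proof. by move=> i j; rewrite mxE /fPX [eqn _ _]val_eqE; case: (i == j). Qed.

Lemma mx_entries_PZ : mx_entries PZ fPZ.
Proof. by move=> i j; rewrite mxE /fPZ [eqn _ _]val_eqE. Qed.

Lemma mx_entries_phiplus : mx_entries phiplus fphi.
Proof. by move=> i j; rewrite !mxE. Qed.

Lemma mx_entries_ext m n (A : 'M_(m, n)) f g :
  mx_entries A f -> (forall i j, (i < m)%N -> (j < n)%N -> f i j = g i j) ->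
  mx_entries A g.
Proof. by move=> Af fg i j; rewrite Af fg. Qed.

Lemma mx_entries_eq m n (A B : 'M_(m, n)) f g :
  mx_entries A f -> mx_entries B g ->
  (forall i j, (i < m)%N -> (j < n)%N -> f i j = g i j) -> A = B.
Proof. by move=> Af Bg fg; apply/matrixP=> i j; rewrite Af Bg fg. Qed.

Ltac mx_entries_step := match goal with
  | |- mx_entries phiplus _ => apply: mx_entries_phiplus
  | |- mx_entries PX _ => apply: mx_entries_PX
  | |- mx_entries PZ _ => apply: mx_entries_PZ
  | |- mx_entries (_%:M) _ => apply: mx_entries_scalar1
  | |- mx_entries (GRing.one _) _ => apply: mx_entries_scalar1
  | |- mx_entries (?A *t ?B) _ => eapply (@mx_entries_tens _ _ _ _ A B)
  | |- mx_entries (_ *m _) _ => eapply mx_entries_mul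
  | |- mx_entries (_ + _) _ => eapply mx_entries_add
  | |- mx_entries (_ *: _) _ =>
      first [eapply mx_entries_scale_entry | eapply mx_entries_scale]
  | |- mx_entries (_^T) _ => eapply mx_entries_tr
  | |- mx_entries _ _ => eapply mx_entries_var
  end.

Ltac mx_entries_solve := repeat mx_entries_step.

Ltac case_lt i hi :=
  let n := fresh "n" in let h := fresh "h" in
  move: i hi => [|[|[|[|n]]]] h; try by rewrite !ltnS ltn0 in h.

Ltac eval_ord_consts := repeat match goal with
  | |- context [nat_of_ord ?x] =>
      let v := eval vm_compute in (nat_of_ord x) in change (nat_of_ord x) with v
  end.

Ltac mx_entries_eval :=
  let i := fresh "i" in let j := fresh "j" in
  let hi := fresh "hi" in let hj := fresh "hj" in
  eval_ord_consts; move=> i j hi hj; case_lt i hi; case_lt j hj;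
  cbv beta iota zeta delta [fmul fadd fscale ftens ftr fsum fid fPX fPZ fphi fbell
    iota foldr Nat.div Nat.modulo Nat.divmod fst snd subn Nat.sub muln Nat.mul
    addn Nat.add eqn orb].

Lemma adj_phiplus : adj phiplus = phiplus^T.
Proof.
apply/matrixP=> i j; rewrite !mxE geC0_conj // mulr_ge0 ?invr_ge0 ?sqrtC_ge0 ?ler0n //.
by case: ifP.
Qed.

Lemma mx_entries_PsiMN a b : mx_entries (PsiMN a b) (fbell a b).
Proof.
case: a => [[|[|//]] ?]; case: b => [[|[|//]] ?];
  rewrite /PsiMN ?expr0 ?expr1 ?mul1mx ?mulmx1;
  (eapply mx_entries_ext; [mx_entries_solve | mx_entries_eval]); ring.
Qed.

Lemma mx_entries_adj_PsiMN a b : mx_entries (adj (PsiMN a b)) (ftr (fbell a b)).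
Proof.
case: a => [[|[|//]] ?]; case: b => [[|[|//]] ?];
  rewrite /PsiMN ?expr0 ?expr1 ?mul1mx ?mulmx1 adj_mul (@adj_tens 2 2 2 2) adj_scalar1;
  rewrite ?adj_mul ?adj_PX ?adj_PZ adj_phiplus;
  (eapply mx_entries_ext; [mx_entries_solve | mx_entries_eval]); ring.
Qed.

Ltac bell_entries_solve := repeat first
  [ match goal with
    | |- mx_entries (PsiMN _ _) _ => apply: mx_entries_PsiMN
    | |- mx_entries (adj (PsiMN _ _)) _ => apply: mx_entries_adj_PsiMN
    | |- mx_entries (adj (_ *m _)) _ => rewrite adj_mul
    | |- mx_entries (adj PX) _ => rewrite adj_PX
    | |- mx_entries (adj PZ) _ => rewrite adj_PZ
    | |- mx_entries (adj (_%:M)) _ => rewrite adj_scalar1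
    | |- mx_entries (adj (GRing.one _)) _ => rewrite adj_scalar1
    end
  | mx_entries_step ].

Lemma tel_pauli_channel rho : tel rho =1 pauli_channel (bell_elem rho).
Proof.
move=> s; rewrite /tel /pauli_channel sum_qix !sum_I2; cbv zeta.
rewrite /bell_elem /Psi /pauli !qfst_qix !qsnd_qix !expr_Zp2_0 !expr_Zp2_1 ?mulmx1 ?mul1mx.
eapply mx_entries_eq; [bell_entries_solve | bell_entries_solve | mx_entries_eval].
all: ring.
Qed.

Lemma PY_tens : (PY *t PY : 'M_4) = - ((PX *m PZ) *t (PX *m PZ)).
Proof. by rewrite PY_PXPZ tensmxZl tensmxZr scalerA mulCii scaleN1r. Qed.

Lemma conj_oppmx n (M X : 'M[algC]_n) : (- M) *m X *m adj (- M) = M *m X *m adj M.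
Proof. by rewrite adj_opp !mulNmx mulmxN opprK. Qed.

Lemma inv_sqrt2_exp4 :
  (sqrtC 2)^-1 * (sqrtC 2)^-1 * ((sqrtC 2)^-1 * (sqrtC 2)^-1) = (4%:R)^-1 :> algC.
Proof.
have half : (sqrtC 2)^-1 * (sqrtC 2)^-1 = (2%:R)^-1 :> algC.
  by rewrite -invfM -expr2 sqrtCK.
by rewrite half -invfM -natrM.
Qed.

Lemma twirl_bell_diag X : twirl X = \sum_k bell_elem X k *: bell_proj k.
Proof.
rewrite /twirl !big_cons big_nil addr0 PY_tens conj_oppmx !(@adj_tens 2 2 2 2).
rewrite sum_qix !sum_I2 /bell_elem /bell_proj /Psi !qfst_qix !qsnd_qix.
eapply mx_entries_eq; [bell_entries_solve | bell_entries_solve | mx_entries_eval].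
all: rewrite -inv_sqrt2_exp4; ring.
Qed.

Lemma twirl_swap rho1 rho2 :
  twirl (id_tensor (tel rho2) rho1) =
    \sum_j (\sum_k bell_elem rho2 k * bell_elem rho1 (bell_add j k)) *: bell_proj j.
Proof.
rewrite (eq_id_tensor rho1 (tel_pauli_channel rho2)) id_tensor_pauli_channel twirl_bell_diag.
apply: eq_bigr => j _; rewrite bell_elem_lincomb; congr (_ *: _).
by apply: eq_bigr => k _; rewrite bell_elem_id_pauli_conj.
Qed.

Lemma bell_add_qix a b c d : bell_add (qix a b) (qix c d) = qix (a + c) (b + d).
Proof. by rewrite /bell_add !qfst_qix !qsnd_qix. Qed.

Lemma Zp2_add11 : (1 + 1 : 'I_2) = 0.
Proof. exact: val_inj. Qed.

Lemma bell_index_qix : [/\ k0 = qix 0 0, k1 = qix 0 1, k2 = qix 1 0 & k3 = qix 1 1].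
Proof. by split; apply: val_inj. Qed.

Theorem corollary2 (rho1 rho2 : 'M[algC]_4) :
  is_state rho1 -> is_state rho2 ->
  let l := bell_elem rho1 in
  let mu := bell_elem rho2 in
  twirl (id_tensor (tel rho2) rho1) =
      (l k0 * mu k0 + l k1 * mu k1 + l k2 * mu k2 + l k3 * mu k3) *: bell_proj k0
    + (l k0 * mu k1 + l k1 * mu k0 + l k2 * mu k3 + l k3 * mu k2) *: bell_proj k1
    + (l k0 * mu k2 + l k2 * mu k0 + l k3 * mu k1 + l k1 * mu k3) *: bell_proj k2
    + (l k0 * mu k3 + l k3 * mu k0 + l k1 * mu k2 + l k2 * mu k1) *: bell_proj k3.
Proof.
(* The identity holds for arbitrary 4x4 matrices. *)
move=> _ _ /=; have [-> -> -> ->] := bell_index_qix.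
rewrite twirl_swap sum_qix !sum_I2 addrA.
congr (_ *: _ + _ *: _ + _ *: _ + _ *: _);
  by rewrite sum_qix !sum_I2 !bell_add_qix !(addr0, add0r, Zp2_add11); ring.
Qed.
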